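(* Fix $X\in\{\mathsf B,\mathsf C,\mathsf D\}$ and $n\in\mathbb Z_{>0}$. Let $v\in W^X_n$ with $k:=\mathsf{LD}(v)>0$, let $l\ge1$, and let $j_1,\dots,j_l\in\mathbb Z$ satisfy either $j_1<j_2<\cdots<j_l<k$, or (only when $X=\mathsf B$) $j_1=0$ and $j_2<\cdots<j_l<k$, such that $t_{j_ak}\in W^X_\infty$ and $\ell^X(vt_{j_1k}t_{j_2k}\cdots t_{j_ak})=\ell^X(v)+a$ for all $a\in[l]$. Let $u=vt_{j_1k}t_{j_2k}\cdots t_{j_lk}$. Then either (a) $u\in W^X_n$ and $u\prec_{\mathsf{LD}}v$, or (b) $u\in W^X_{n+1}$ and $\mathsf{LD}(u)<\mathsf{LD}(v)$.
   Context: A signed permutation is a bijection $w$ of $\mathbb Z$ with $w(-i)=-w(i)$ and $w(i)=i$ for all but finitely many $i$; $(wt)(m)=w(t(m))$. $W^{\mathsf B}_\infty=W^{\mathsf C}_\infty$: all signed permutations; $W^{\mathsf D}_\infty$: those with $|\{i>0:w(i)<0\}|$ even; $W^X_n$: elements fixing every $m>n$. Lengths $\ell^{\mathsf B}=\ell^{\mathsf C}=(\mathrm{inv}+\ell_0)/2$, $\ell^{\mathsf D}=(\mathrm{inv}-\ell_0)/2$, with $\mathrm{inv}(w)=|\{(p,q):p<q,w(p)>w(q)\}|$ over $\mathbb Z^2$ and $\ell_0(w)=|\{p>0:w(p)<0\}|$. For $i\ne0$, $t_{ij}=(i,j)(-i,-j)$; $t_{0j}=(-j,j)$ (in $W^{\mathsf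 B}_\infty$, not in $W^{\mathsf D}_\infty$). $\mathrm{Des}(w)=\{m>0:w(m)>w(m+1)\}$, $\mathsf{LD}(w)=\max(\{0\}\cup\mathrm{Des}(w))$. The partial order $\prec_{\mathsf{LD}}$ on signed permutations: $u\prec_{\mathsf{LD}}w$ iff $\mathsf{LD}(u)<\mathsf{LD}(w)$, or $0<\mathsf{LD}(u)=\mathsf{LD}(w)$ and $u(\mathsf{LD}(u))<w(\mathsf{LD}(w))$. *)

(* Signed permutations are modelled as functions int -> int. *)
From Stdlib Require Import ClassicalEpsilon.
From mathcomp Require Import all_boot all_order all_algebra.
Set Implicit Arguments. Unset Strict Implicit. Unset Printing Implicit Defensive.
Import Order.TTheory GRing.Theory Num.Theory.
Local Open Scope ring_scope.

Inductive typ := TB | TC | TD.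

Definition is_sperm (w : int -> int) : Prop :=
  bijective w /\ (forall i, w (- i) = - w i) /\
  exists N : nat, forall i : int, (N < `|i|)%N -> w i = i.

(* a chosen support bound (any valid one; all statistics below do not
   depend on which valid bound is chosen) *)
Definition sbound (w : int -> int) : nat :=
  epsilon (inhabits 0%N) (fun N : nat => forall i : int, (N < `|i|)%N -> w i = i).

Definition win (N : nat) : seq int := [seq (i%:Z - N%:Z) | i <- iota 0 (2 * N).+1].
Definition pwin (N : nat) : seq int := [seq i.+1%:Z | i <- iota 0 N].

Definition inv (w : int -> int) : nat :=
  (\sum_(p <- win (sbound w)) \sum_(q <- win (sbound w)) (((p < q)%R && (w q < w p)%R) : nat))%N.

Definition ell0 (w : int -> int) : nat :=
  (\sum_(p <- pwin (sbound w)) ((w p < 0)%R : nat))%N.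

Definition len (X : typ) (w : int -> int) : nat :=
  match X with
  | TD => ((inv w - ell0 w) %/ 2)%N
  | _ => ((inv w + ell0 w) %/ 2)%N
  end.

Definition LD (w : int -> int) : nat :=
  (\max_(m <- iota 1 (sbound w) | (w (m%:Z + 1) < w m%:Z)%R) m)%N.

Definition inWinf (X : typ) (w : int -> int) : Prop :=
  is_sperm w /\ (X = TD -> ~~ odd (ell0 w)).

Definition inW (X : typ) (n : nat) (w : int -> int) : Prop :=
  inWinf X w /\ forall m : int, n%:Z < m -> w m = m.

Definition transp (a b : int) (m : int) : int :=
  if m == a then b else if m == b then a else m.

Definition t (i j : int) : int -> int :=
  if i == 0 then transp (- j) j
  else transp i j \o transp (- i) (- j).

Fixpoint prodt (v : int -> int) (j : nat -> int) (k : int) (a : nat) : int -> int :=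
  match a with
  | 0%N => v
  | a'.+1 => prodt v j k a' \o t (j a) k
  end.

Definition precLD (u w : int -> int) : Prop :=
  (LD u < LD w)%N \/ ((0 < LD u)%N /\ LD u = LD w /\ u (LD u)%:Z < w (LD w)%:Z).

From Pilot Require Import Defs.
From mathcomp Require Import all_boot all_order all_algebra zify.
From Stdlib Require Import ClassicalEpsilon FunctionalExtensionality.
Import Order.TTheory GRing.Theory Num.Theory.
Local Open Scope ring_scope.
Set Implicit Arguments. Unset Strict Implicit. Unset Printing Implicit Defensive.

(* Write k = LD v. Counting inversions and negative positions on a finite window
   shows that a reflection t_{jk} (j < k) raising the length by exactly one has
   j <> 0, -k, satisfies w j < w k, preserves the parity of ell0, and admits no
   pair c, -c of positions lying between j and k both in position and in value.
   Hence the value at k strictly decreases along the chain, so u k < v k.  Only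
   the first reflection reaches beyond k, exchanging v k with v at position -j_1;
   the last property gives -j_1 <= n + 1 and shows that u has no descent beyond
   k.  If -j_1 <= n then u is in W_n and u precedes v; if -j_1 = n + 1 the chain
   has a single step, u is in W_(n+1), and u k = -(n+1) rules out a descent
   at k, so LD u < k. *)

Definition fixed_beyond (N : nat) (w : int -> int) := forall i : int, (N < `|i|)%N -> w i = i.

Lemma fixed_beyond_le N M w : fixed_beyond N w -> (N <= M)%N -> fixed_beyond M w.
Proof. by move=> h hNM i hi; apply: h; lia. Qed.

Lemma fixed_beyond_comp N f g :
  fixed_beyond N f -> fixed_beyond N g -> fixed_beyond N (f \o g).
Proof. by move=> hf hg x hx /=; rewrite hg // hf. Qed.

Lemma fixed_beyond_sbound N w : fixed_beyond N w -> fixed_beyond (sbound w) w.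
Proof.
move=> hN; apply: (epsilon_spec (inhabits 0%N) (fun N => fixed_beyond N w)).
by exists N.
Qed.

Lemma fixed_beyond_abs_le N w x : injective w -> fixed_beyond N w ->
  (`|x| <= N)%N -> (`|w x| <= N)%N.
Proof.
move=> inj hw hx; rewrite leqNgt; apply/negP => hwx.
by move: (hwx); rewrite (inj _ _ (hw _ hwx)) ltnNge hx.
Qed.

Lemma mem_win (N : nat) (x : int) : (x \in win N) = (`|x| <= N)%N.
Proof.
apply/mapP/idP => [[i]|hx]; first by rewrite mem_iota => /andP[_ hi] ->; lia.
by exists (absz (x + N%:Z)); rewrite ?mem_iota; lia.
Qed.

Lemma uniq_win N : uniq (win N).
Proof. by rewrite map_inj_uniq ?iota_uniq // => a b; lia. Qed.

Lemma mem_pwin (N : nat) (x : int) : (x \in pwin N) = (0 < x) && (x <= N%:Z).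
Proof.
apply/mapP/idP => [[i]|hx]; first by rewrite mem_iota => /andP[_ hi] ->; lia.
by exists (absz x).-1; rewrite ?mem_iota; lia.
Qed.

Lemma uniq_pwin N : uniq (pwin N).
Proof. by rewrite map_inj_uniq ?iota_uniq // => a b; lia. Qed.

Lemma big_seq_sub (s r : seq int) (F : int -> nat) :
  uniq s -> uniq r -> {subset r <= s} -> (forall x, x \in s -> x \notin r -> F x = 0%N) ->
  (\sum_(x <- s) F x = \sum_(x <- r) F x)%N.
Proof.
move=> us ur rs F0.
rewrite (bigID (mem r)) /= [X in (_ + X)%N]big1_seq ?addn0; last first.
  by move=> x /andP[xr xs]; apply: F0.
rewrite -big_filter; apply/perm_big/uniq_perm; rewrite ?filter_uniq // => x.
by rewrite mem_filter andb_idr //; apply: rs.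
Qed.

Definition inv_on (N : nat) (w : int -> int) : nat :=
  (\sum_(p <- win N) \sum_(q <- win N) (((p < q)%R && (w q < w p)%R) : nat))%N.

Definition ell0_on (N : nat) (w : int -> int) : nat :=
  (\sum_(p <- pwin N) ((w p < 0)%R : nat))%N.

Definition len_on (X : typ) N w : nat :=
  match X with
  | TD => ((inv_on N w - ell0_on N w) %/ 2)%N
  | _ => ((inv_on N w + ell0_on N w) %/ 2)%N
  end.

Lemma inv_on_widen N M w : injective w -> fixed_beyond N w -> (N <= M)%N ->
  inv_on M w = inv_on N w.
Proof.
move=> inj hw hNM; have sub : {subset win N <= win M} by move=> x; rewrite !mem_win; lia.
have wN y : (`|y| <= N)%N -> (`|w y| <= N)%N := fixed_beyond_abs_le inj hw.
rewrite /inv_on (big_seq_sub (uniq_win M) (uniq_win N) sub) => [|x _].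
  apply: eq_bigr => x _; apply: big_seq_sub; rewrite ?uniq_win // => y _.
  rewrite mem_win -ltnNge => hy; rewrite (hw _ hy).
  case: (leqP `|x| N) => hx; first by have := wN _ hx; case: ltgtP; lia.
  by rewrite (hw _ hx); case: ltgtP; lia.
rewrite mem_win -ltnNge => hx; apply: big1 => y _; rewrite (hw _ hx).
case: (leqP `|y| N) => hy; first by have := wN _ hy; case: ltgtP; lia.
by rewrite (hw _ hy); case: ltgtP; lia.
Qed.

Lemma ell0_on_widen N M w : fixed_beyond N w -> (N <= M)%N -> ell0_on M w = ell0_on N w.
Proof.
move=> hw hNM; apply: big_seq_sub; rewrite ?uniq_pwin // => x.
  by rewrite !mem_pwin; lia.
rewrite !mem_pwin => /andP[x0 xM] xN.
by rewrite hw; [case: ltgtP => //; lia | lia].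
Qed.

Lemma inv_eq_on N w : injective w -> fixed_beyond N w -> Defs.inv w = inv_on N w.
Proof.
move=> inj hw; have hs := fixed_beyond_sbound hw.
rewrite -[LHS]/(inv_on (sbound w) w).
by rewrite -(inv_on_widen inj hs (leq_maxl _ N)) (inv_on_widen inj hw (leq_maxr _ _)).
Qed.

Lemma ell0_eq_on N w : fixed_beyond N w -> ell0 w = ell0_on N w.
Proof.
move=> hw; have hs := fixed_beyond_sbound hw.
rewrite /ell0 -[LHS]/(ell0_on (sbound w) w).
by rewrite -(ell0_on_widen hs (leq_maxl _ N)) (ell0_on_widen hw (leq_maxr _ _)).
Qed.

Lemma len_eq_on X N w : injective w -> fixed_beyond N w -> len X w = len_on X N w.
Proof. by move=> inj hw; case: X; rewrite /len /len_on (inv_eq_on inj hw) (ell0_eq_on hw). Qed.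

(* The pairs [(0, p)] with [p > 0 > w p] are inversions. *)
Lemma ell0_on_le_inv_on N w : w 0 = 0 -> (ell0_on N w <= inv_on N w)%N.
Proof.
move=> w0; rewrite /inv_on (bigD1_seq 0) ?uniq_win ?mem_win //= w0.
apply: leq_trans (leq_addr _ _).
rewrite /ell0_on (@big_seq_sub (win N) (pwin N)) ?uniq_win ?uniq_pwin // => [|x|x].
- by apply/eq_leq/eq_big_seq => x; rewrite mem_pwin => /andP[->].
- by rewrite mem_win mem_pwin; lia.
- by rewrite mem_win mem_pwin => hx; case: (ltP 0 x) => //= x0; lia.
Qed.

Lemma transpK p q : involutive (transp p q).
Proof. by move=> x; rewrite /transp; do ![case: eqP => //=]; lia. Qed.

Lemma transp_inj p q : injective (transp p q).
Proof. exact: inv_inj (@transpK p q). Qed.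

Lemma transp_id p q x : x != p -> x != q -> transp p q x = x.
Proof. by move=> /negbTE xp /negbTE xq; rewrite /transp xp xq. Qed.

Lemma transp_l p q : transp p q p = q.
Proof. by rewrite /transp eqxx. Qed.

Lemma transp_r p q : transp p q q = p.
Proof. by rewrite /transp; case: eqVneq => [->|]; rewrite ?eqxx. Qed.

Lemma abs_transp_le N p q x : (`|p| <= N)%N -> (`|q| <= N)%N ->
  (`|transp p q x| <= N)%N = (`|x| <= N)%N.
Proof.
move=> hp hq; rewrite /transp.
by case: eqVneq => [->|_]; [|case: eqVneq => [->|_]]; rewrite ?hp ?hq.
Qed.

Lemma big_win_transp N p q (F : int -> nat) : (`|p| <= N)%N -> (`|q| <= N)%N ->
  (\sum_(x <- win N) F (transp p q x) = \sum_(x <- win N) F x)%N.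
Proof.
move=> hp hq; rewrite -(big_map (transp p q) xpredT F); apply/perm_big/uniq_perm.
- by rewrite (map_inj_uniq (@transp_inj p q)) uniq_win.
- exact: uniq_win.
move=> x; apply/mapP/idP => [[y yN ->]|xN]; first by rewrite mem_win abs_transp_le // -mem_win.
by exists (transp p q x); rewrite ?transpK // mem_win abs_transp_le // -mem_win.
Qed.

Section SplitTwo.
Variables (r : seq int) (a b : int).
Hypotheses (r_uniq : uniq r) (ar : a \in r) (br : b \in r) (ab : a != b).

Lemma bigD2_seq (F : int -> nat) :
  (\sum_(x <- r) F x = F a + F b + \sum_(x <- r | (x != a) && (x != b)) F x)%N.
Proof.
rewrite (bigD1_seq a) //= -big_filter (bigD1_seq b) ?filter_uniq //.
  by rewrite big_filter_cond addnA.
by rewrite mem_filter eq_sym ab.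
Qed.

Lemma big_pairsD2_seq (F : int -> int -> nat) :
  (\sum_(x <- r) \sum_(y <- r) F x y =
   F a a + F a b + F b a + F b b
   + \sum_(c <- r | (c != a) && (c != b)) (F a c + F b c + F c a + F c b)
   + \sum_(x <- r | (x != a) && (x != b)) \sum_(y <- r | (y != a) && (y != b)) F x y)%N.
Proof.
under eq_bigr do rewrite bigD2_seq.
by rewrite bigD2_seq !big_split /=; lia.
Qed.

End SplitTwo.

Definition between_on (N : nat) (w : int -> int) (p q : int) : nat :=
  (\sum_(c <- win N) (((p < c)%R && (c < q)%R && (w p < w c)%R && (w c < w q)%R) : nat))%N.

Lemma between_on_gt0 N w p q c : (`|c| <= N)%N ->
  p < c -> c < q -> w p < w c -> w c < w q -> (0 < between_on N w p q)%N.
Proof.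
move=> cN pc cq wpc wcq.
by rewrite /between_on (bigD1_seq c) ?uniq_win ?mem_win //= pc cq wpc wcq.
Qed.

(* Swapping the values at [p < q] turns the inversions involving a third
   position [c] into those of the original, plus two for each [c] between. *)
Lemma inversions_swap_third (p q c x y z : int) :
  p < q -> x < y -> c != p -> c != q -> z != x -> z != y ->
  ((((q < c)%R && (z < x)%R) : nat) + (((p < c)%R && (z < y)%R) : nat)
   + (((c < q)%R && (x < z)%R) : nat) + (((c < p)%R && (y < z)%R) : nat) =
   (((p < c)%R && (z < x)%R) : nat) + (((q < c)%R && (z < y)%R) : nat)
   + (((c < p)%R && (x < z)%R) : nat) + (((c < q)%R && (y < z)%R) : nat)
   + 2 * (((p < c)%R && (c < q)%R && (x < z)%R && (z < y)%R) : nat))%N.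
Proof.
move=> pq xy cp cq zx zy; move: cp cq zx zy pq xy.
case: (ltgtP c p) => // h1 _; case: (ltgtP c q) => // h2 _;
case: (ltgtP z x) => // h3 _; case: (ltgtP z y) => // h4 _ /= h5 h6;
by rewrite ?andbT ?andbF /=; lia.
Qed.

Lemma inv_on_transp N (w g : int -> int) (p q : int) : injective w ->
  (`|p| <= N)%N -> (`|q| <= N)%N -> p < q -> w p < w q ->
  (forall x, g x = w (transp p q x)) ->
  inv_on N g = (inv_on N w + 1 + 2 * between_on N w p q)%N.
Proof.
move=> inj pN qN pq wpq gE; set s := transp p q.
have pw : p \in win N by rewrite mem_win.
have qw : q \in win N by rewrite mem_win.
have pnq : p != q by rewrite lt_eqF.
have sp : s p = q by rewrite /s transp_l.
have sq : s q = p by rewrite /s transp_r.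
have sR x : (x != p) && (x != q) -> s x = x by case/andP; apply: transp_id.
have -> : inv_on N g =
    (\sum_(x <- win N) \sum_(y <- win N) (((s x < s y)%R && (w y < w x)%R) : nat))%N.
  rewrite /inv_on -(big_win_transp _ pN qN); apply: eq_bigr => x _.
  rewrite -(big_win_transp _ pN qN); apply: eq_bigr => y _.
  by rewrite !gE /s !transpK.
rewrite /inv_on /between_on !(big_pairsD2_seq (uniq_win N) pw qw pnq).
rewrite (bigD2_seq (uniq_win N) pw qw pnq) sp sq !ltxx pq (lt_gtF pq) wpq (lt_gtF wpq).
rewrite /= ?andbF !addn0 !add0n.
have -> : (\sum_(x <- win N | (x != p) && (x != q))
    \sum_(y <- win N | (y != p) && (y != q)) (((s x < s y)%R && (w y < w x)%R) : nat) =
    \sum_(x <- win N | (x != p) && (x != q))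
    \sum_(y <- win N | (y != p) && (y != q)) (((x < y)%R && (w y < w x)%R) : nat))%N.
  by apply: eq_bigr => x /sR ->; apply: eq_bigr => y /sR ->.
have -> : (\sum_(c <- win N | (c != p) && (c != q))
    ((((q < s c)%R && (w c < w p)%R) : nat) + (((p < s c)%R && (w c < w q)%R) : nat)
     + (((s c < q)%R && (w p < w c)%R) : nat) + (((s c < p)%R && (w q < w c)%R) : nat)) =
    \sum_(c <- win N | (c != p) && (c != q))
    ((((p < c)%R && (w c < w p)%R) : nat) + (((q < c)%R && (w c < w q)%R) : nat)
     + (((c < p)%R && (w p < w c)%R) : nat) + (((c < q)%R && (w q < w c)%R) : nat)
     + 2 * (((p < c)%R && (c < q)%R && (w p < w c)%R && (w c < w q)%R) : nat)))%N.
  apply: eq_bigr => c /[dup] /sR -> /andP[cp cq].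
  by apply: inversions_swap_third => //; [move: cp | move: cq]; apply: contra_neq => /inj.
by rewrite big_split /= -big_distrr /=; lia.
Qed.

Lemma inv_on_transp_desc N (w g : int -> int) (p q : int) : injective w ->
  (`|p| <= N)%N -> (`|q| <= N)%N -> p < q -> w q < w p ->
  (forall x, g x = w (transp p q x)) -> (inv_on N g < inv_on N w)%N.
Proof.
move=> inj pN qN pq wqp gE.
have ginj : injective g by move=> x y; rewrite !gE => /inj /transp_inj.
have wE x : w x = g (transp p q x) by rewrite gE transpK.
rewrite (inv_on_transp ginj pN qN pq _ wE); first lia.
by rewrite !gE transp_l transp_r.
Qed.

Ltac solve_t := rewrite /t /transp /=; do ![case: eqP => //=]; lia.

Lemma tK i j : j != 0 -> involutive (t i j).
Proof. by move=> /eqP j0 x; solve_t. Qed.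

Lemma tN i j x : j != 0 -> t i j (- x) = - t i j x.
Proof. by move=> /eqP j0; solve_t. Qed.

Lemma t_id i j x : x != i -> x != j -> x != - i -> x != - j -> t i j x = x.
Proof. by move=> /eqP xi /eqP xj /eqP xni /eqP xnj; solve_t. Qed.

Lemma t_i i j : i != 0 -> i != - j -> t i j i = j.
Proof. by move=> /eqP i0 /eqP ij; solve_t. Qed.

Lemma t_j i j : i != 0 -> i != - j -> j != 0 -> t i j j = i.
Proof. by move=> /eqP i0 /eqP ij /eqP j0; solve_t. Qed.

Lemma t_Ni i j : i != 0 -> i != - j -> j != 0 -> t i j (- i) = - j.
Proof. by move=> /eqP i0 /eqP ij /eqP j0; solve_t. Qed.

Lemma t_Nj j x : t (- j) j x = x.
Proof. by solve_t. Qed.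

Lemma t0 j : t 0 j = transp (- j) j.
Proof. by rewrite /t eqxx. Qed.

Lemma t_transp i j x : i != 0 -> t i j x = transp i j (transp (- j) (- i) x).
Proof. by move=> /eqP i0; solve_t. Qed.

Lemma fixed_beyond_t i j : fixed_beyond (maxn `|i| `|j|) (t i j).
Proof. by move=> x hx; apply: t_id; apply/eqP; lia. Qed.

Lemma sperm_inj w : is_sperm w -> injective w.
Proof. by case=> /bij_inj. Qed.

Lemma sperm_odd w : is_sperm w -> forall x, w (- x) = - w x.
Proof. by case=> _ []. Qed.

Lemma sperm_fixed_beyond w : is_sperm w -> exists N, fixed_beyond N w.
Proof. by case=> _ [_ [N hN]]; exists N. Qed.

Lemma sperm0 w : is_sperm w -> w 0 = 0.
Proof. by move/sperm_odd/(_ 0)/eqP; rewrite oppr0 -addr_eq0 -mulr2n mulrn_eq0 => /eqP. Qed.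

Lemma sperm_neq0 w x : is_sperm w -> x != 0 -> w x != 0.
Proof.
move=> hw /eqP x0; apply/eqP => wx0; apply: x0.
by apply: (sperm_inj hw); rewrite wx0 sperm0.
Qed.

Lemma sperm_comp f g : is_sperm f -> is_sperm g -> is_sperm (f \o g).
Proof.
move=> hf hg; have [Nf vf] := sperm_fixed_beyond hf; have [Ng vg] := sperm_fixed_beyond hg.
case: hf hg => bf [ff _] [bg [fg _]]; split; first exact: bij_comp.
split; first by move=> x /=; rewrite fg ff.
exists (maxn Nf Ng); apply: fixed_beyond_comp.
  exact: fixed_beyond_le vf (leq_maxl _ _).
exact: fixed_beyond_le vg (leq_maxr _ _).
Qed.

Lemma sperm_t i j : j != 0 -> is_sperm (t i j).
Proof.
move=> j0; split; first by exists (t i j); apply: tK.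
by split; [move=> x; apply: tN | exists (maxn `|i| `|j|); apply: fixed_beyond_t].
Qed.

Lemma ell0_on_update N (f g : int -> int) (a : int) : 0 < a -> a <= N%:Z ->
  (forall x, 0 < x -> x != a -> g x = f x) ->
  (ell0_on N g + ((f a < 0)%R : nat) = ell0_on N f + ((g a < 0)%R : nat))%N.
Proof.
move=> a0 aN gf; rewrite /ell0_on !(bigD1_seq a) ?uniq_pwin ?mem_pwin ?a0 //=.
rewrite [X in (_ + X + _)%N]big_seq_cond [X in (_ = _ + X + _)%N]big_seq_cond.
rewrite (eq_bigr (fun x => ((f x < 0)%R : nat))).
  by rewrite addnAC [RHS]addnAC [in LHS](addnC (g a < 0)%R).
by move=> x /andP[]; rewrite mem_pwin => /andP[x0 _] xa; rewrite gf.
Qed.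

Lemma ell0_on_update2 N (f g : int -> int) (a b : int) : 0 < a -> a <= N%:Z -> 0 < b -> b <= N%:Z -> a != b ->
  (forall x, 0 < x -> x != a -> x != b -> g x = f x) ->
  (ell0_on N g + ((f a < 0)%R : nat) + ((f b < 0)%R : nat) =
   ell0_on N f + ((g a < 0)%R : nat) + ((g b < 0)%R : nat))%N.
Proof.
move=> a0 aN b0 bN ab gf; pose h x := if x == a then g a else f x.
have ha := @ell0_on_update N f h a a0 aN.
have hb := @ell0_on_update N h g b b0 bN.
rewrite /h eqxx eq_sym (negbTE ab) in ha hb.
have {}ha := ha (fun x _ xa => ifN_eq _ _ xa); rewrite -/h in ha.
have {}hb : (ell0_on N g + ((f b < 0)%R : nat) = ell0_on N h + ((g b < 0)%R : nat))%N.
  by apply: hb => x x0 xb; rewrite /h; case: eqVneq => [->|xa]; last exact: gf.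
lia.
Qed.

Lemma lt0N_add_lt0 (x : int) : x != 0 -> (((- x < 0)%R : nat) + ((x < 0)%R : nat))%N = 1%N.
Proof. by rewrite oppr_lt0; case: ltgtP. Qed.

Lemma ell0_t0 K : (0 < K)%N -> ell0 (t 0 K%:Z) = 1%N.
Proof.
move=> K0; have hK : fixed_beyond K (t 0 K%:Z) by move=> x hx; apply: t_id; apply/eqP; lia.
have id0 : ell0_on K id = 0%N.
  by apply: big1_seq => x; rewrite mem_pwin => /andP[_ /andP[x0 _]]; rewrite /= ltNge ltW.
rewrite (ell0_eq_on hK) t0.
have := @ell0_on_update K id (transp (- K%:Z) K%:Z) K%:Z; rewrite transp_r oppr_lt0 id0 /=.
rewrite addn0 => ->; try lia.
by move=> x x0 xK; rewrite transp_id //; apply/eqP; lia.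
Qed.

(* [t_{0k}] is the transposition [(-k, k)]: if [w k < 0] it removes inversions and
   negative positions, otherwise it also creates the inversions through [0]. *)
Lemma len_on_comp_t0 (X : typ) N w K : X <> TD -> is_sperm w -> fixed_beyond N w ->
  (0 < K)%N -> (K <= N)%N -> len_on X N (w \o t 0 K%:Z) <> (len_on X N w + 1)%N.
Proof.
move=> XD hw wN K0 KN; set k := K%:Z; set g := w \o t 0 k.
have inj := sperm_inj hw; have wodd := sperm_odd hw.
have gE x : g x = w (transp (- k) k x) by rewrite /g /= t0.
have kN : (`|k| <= N)%N by lia.
have NkN : (`|- k| <= N)%N by lia.
have Nkk : - k < k by lia.
have ell0E : (ell0_on N g + ((w k < 0)%R : nat) = ell0_on N w + ((- w k < 0)%R : nat))%N.
  have gk : g k = w (- k) by rewrite gE transp_r.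
  rewrite -wodd -gk.
  apply: ell0_on_update; try lia.
  by move=> x x0 xk; rewrite gE transp_id //; apply/eqP; lia.
have wk0 : w k != 0 by apply: sperm_neq0; rewrite // /k; lia.
case: (ltgtP (w k) 0) wk0 ell0E => // hwk _; rewrite oppr_lt0 /= => ell0E.
- have := inv_on_transp_desc inj NkN kN Nkk _ gE; rewrite wodd => /(_ ltac:(lia)).
  by case: X XD => // _; rewrite /len_on; lia.
- have := inv_on_transp inj NkN kN Nkk _ gE; rewrite wodd => /(_ ltac:(lia)) invE.
  have : (0 < between_on N w (- k) k)%N.
    by apply: (@between_on_gt0 _ _ _ _ 0); rewrite ?wodd ?(sperm0 hw) //; lia.
  by case: X XD => // _; rewrite /len_on; lia.
Qed.

Section ReflectionStep.
Variables (w : int -> int) (j : int) (K N : nat).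
Hypotheses (w_sperm : is_sperm w) (K_gt0 : (0 < K)%N) (jK : j < K%:Z)
  (j_neq0 : j != 0) (j_neqN : j != - K%:Z)
  (jN : (`|j| <= N)%N) (KN : (K <= N)%N).
Local Notation k := K%:Z.
Local Notation w1 := (w \o transp j k).

(* [t_{jk} = (j, k)(-k, -j)] changes the sign of a positive position only
   when [j < 0], by exchanging [w (-j)] with [w k]. *)
Lemma ell0_on_comp_t :
  (ell0_on N (w \o t j k) + 2 * ((j < 0)%R && (w k < 0)%R) =
   ell0_on N w + 2 * ((j < 0)%R && (w j < 0)%R))%N.
Proof.
have wodd := sperm_odd w_sperm.
have k0 : k != 0 by lia.
case: (ltgtP j 0) j_neq0 => // hj _ /=.
- have e := @ell0_on_update2 N w (w \o t j k) (- j) k.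
  rewrite /= t_Ni // t_j // !wodd in e.
  have {}e := e ltac:(lia) ltac:(lia) ltac:(lia) ltac:(lia) ltac:(lia)
    (fun x x0 xj xk => ltac:(rewrite t_id //; apply/eqP; lia)).
  have := lt0N_add_lt0 (sperm_neq0 w_sperm j_neq0).
  have := lt0N_add_lt0 (sperm_neq0 w_sperm k0).
  lia.
- have e := @ell0_on_update2 N w (w \o t j k) j k.
  rewrite /= t_i // t_j // in e.
  have {}e := e ltac:(lia) ltac:(lia) ltac:(lia) ltac:(lia) ltac:(lia)
    (fun x x0 xj xk => ltac:(rewrite t_id //; apply/eqP; lia)).
  lia.
Qed.

Lemma comp_t_transp x : (w \o t j k) x = w1 (transp (- k) (- j) x).
Proof. by rewrite /= t_transp. Qed.

Lemma w1_inj : injective w1.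
Proof. by move=> x y /(sperm_inj w_sperm) /transp_inj. Qed.

Lemma w1_Nk : w1 (- k) = - w k.
Proof. by rewrite /= transp_id ?(sperm_odd w_sperm) //; apply/eqP; lia. Qed.

Lemma w1_Nj : w1 (- j) = - w j.
Proof. by rewrite /= transp_id ?(sperm_odd w_sperm) //; apply/eqP; lia. Qed.

Let kN : (`|k| <= N)%N. Proof. by lia. Qed.
Let NkN : (`|- k| <= N)%N. Proof. by lia. Qed.
Let NjN : (`|- j| <= N)%N. Proof. by lia. Qed.
Let Nkj : - k < - j. Proof. by rewrite ltrN2. Qed.

Lemma inv_on_comp_t_desc : w k < w j -> (inv_on N (w \o t j k) + 2 <= inv_on N w)%N.
Proof.
move=> wkj.
have := inv_on_transp_desc (sperm_inj w_sperm) jN kN jK wkj (fun x => erefl (w1 x)).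
have := inv_on_transp_desc w1_inj NkN NjN Nkj _ comp_t_transp.
by rewrite w1_Nk w1_Nj ltrN2 => /(_ wkj); lia.
Qed.

Lemma inv_on_comp_t_asc : w j < w k ->
  inv_on N (w \o t j k) =
  (inv_on N w + 2 + 2 * between_on N w j k + 2 * between_on N w1 (- k) (- j))%N.
Proof.
move=> wjk.
have := inv_on_transp (sperm_inj w_sperm) jN kN jK wjk (fun x => erefl (w1 x)).
have := inv_on_transp w1_inj NkN NjN Nkj _ comp_t_transp.
by rewrite w1_Nk w1_Nj ltrN2 => /(_ wjk) -> ->; lia.
Qed.

End ReflectionStep.

Section Cover.
Variables (X : typ) (w : int -> int) (j : int) (K : nat).
Hypotheses (w_sperm : is_sperm w) (K_gt0 : (0 < K)%N) (jK : j < K%:Z)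
  (t_inW : inWinf X (t j K%:Z)) (len_cover : len X (w \o t j K%:Z) = (len X w + 1)%N).
Local Notation k := K%:Z.

Lemma cover_window : exists N, [/\ fixed_beyond N w, (`|j| <= N)%N & (K <= N)%N].
Proof.
have [N wN] := sperm_fixed_beyond w_sperm.
exists (N + `|j| + K)%N; split; [apply: fixed_beyond_le wN _ | ..]; lia.
Qed.

Lemma cover_len_on N : fixed_beyond N w -> (`|j| <= N)%N -> (K <= N)%N ->
  len_on X N (w \o t j k) = (len_on X N w + 1)%N.
Proof.
move=> wN jN KN; have k0 : k != 0 by lia.
have wtN : fixed_beyond N (w \o t j k).
  apply: (fixed_beyond_comp wN); apply: (fixed_beyond_le (@fixed_beyond_t j k)); lia.
rewrite -(len_eq_on _ (sperm_inj w_sperm) wN) -len_cover.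
by rewrite (len_eq_on _ (sperm_inj (sperm_comp w_sperm (sperm_t j k0))) wtN).
Qed.

Lemma cover_j_neq0 : j != 0.
Proof.
apply/eqP => j0; have [N [wN jN KN]] := cover_window.
have := cover_len_on wN jN KN; move: t_inW; rewrite j0 => -[_ tD].
have [XD|XD] : X = TD \/ X <> TD by case: X; [right|right|left].
  by move: (tD XD); rewrite ell0_t0.
exact: len_on_comp_t0.
Qed.

Lemma cover_j_neqN : j != - k.
Proof.
apply/eqP => jNk; move: len_cover; rewrite jNk.
rewrite (_ : w \o t (- k) k = w); first lia.
by apply: functional_extensionality => x; rewrite /= t_Nj.
Qed.

Let j_neq0 := cover_j_neq0.
Let j_neqN := cover_j_neqN.

Lemma cover_lt : w j < w k.
Proof.
have [N [wN jN KN]] := cover_window.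
case: (ltgtP (w j) (w k)) => // [wkj|/(sperm_inj w_sperm) jk]; last by move: jK; rewrite jk ltxx.
have := cover_len_on wN jN KN.
have := inv_on_comp_t_desc w_sperm K_gt0 jK j_neq0 j_neqN jN KN wkj.
have := ell0_on_comp_t w_sperm K_gt0 jK j_neq0 j_neqN jN KN.
by case: (X); rewrite /len_on; lia.
Qed.

(* A symmetric pair [c, -c] of intermediate positions would make [t_{jk}] add
   at least six inversions, hence raise the length by at least two. *)
Lemma cover_no_between c : j < c -> c < k -> w j < w c -> w c < w k ->
  c != - j -> c != - k -> False.
Proof.
move=> jc ck wjc wck cNj cNk; have [N [wN jN KN]] := cover_window.
have wodd := sperm_odd w_sperm.
have cN : (`|c| <= N)%N by lia.
have b1 : (0 < between_on N w j k)%N by exact: between_on_gt0 cN jc ck wjc wck.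
have b2 : (0 < between_on N (w \o transp j k) (- k) (- j))%N.
  have w1E x : x != - j -> x != - k -> (w \o transp j k) (- x) = - w x.
    by move=> xj xk; rewrite /= transp_id ?wodd //; apply/eqP; lia.
  by apply: (@between_on_gt0 _ _ _ _ (- c)); rewrite ?w1E; lia.
have := cover_len_on wN jN KN.
have := inv_on_comp_t_asc w_sperm K_gt0 jK j_neq0 j_neqN jN KN cover_lt.
have := ell0_on_comp_t w_sperm K_gt0 jK j_neq0 j_neqN jN KN.
have := ell0_on_le_inv_on N (sperm0 w_sperm).
by case: (X); rewrite /len_on; lia.
Qed.

Lemma cover_ell0_odd : odd (ell0 (w \o t j k)) = odd (ell0 w).
Proof.
have [N [wN jN KN]] := cover_window; have k0 : k != 0 by lia.
have wtN : fixed_beyond N (w \o t j k).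
  apply: (fixed_beyond_comp wN); apply: (fixed_beyond_le (@fixed_beyond_t j k)); lia.
rewrite (ell0_eq_on wN) (ell0_eq_on wtN).
have := congr1 odd (ell0_on_comp_t w_sperm K_gt0 jK j_neq0 j_neqN jN KN).
by rewrite !mul2n !oddD !odd_double !addbF.
Qed.

End Cover.

Lemma LD_leq (u : int -> int) (B : nat) :
  (forall m : nat, (B < m)%N -> u m%:Z <= u (m%:Z + 1)) -> (LD u <= B)%N.
Proof.
move=> asc; apply/bigmax_leqP_seq => m _ desc; rewrite leqNgt; apply/negP => Bm.
by move: desc; rewrite ltNge asc.
Qed.

Lemma LD_descent u : (0 < LD u)%N -> u ((LD u)%:Z + 1) < u (LD u)%:Z.
Proof.
have : (LD u == 0)%N || (u ((LD u)%:Z + 1) < u (LD u)%:Z).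
  apply: (big_ind (fun m : nat => (m == 0)%N || (u (m%:Z + 1) < u m%:Z))) => // [x y hx hy|m ->].
    by rewrite /maxn; case: ltnP.
  exact: orbT.
by case/orP => [/eqP ->|].
Qed.

Lemma LD_ascent u : is_sperm u -> forall m : nat, (LD u < m)%N -> u m%:Z < u (m%:Z + 1).
Proof.
move=> hu m LDm; have [N uN] := sperm_fixed_beyond hu; have us := fixed_beyond_sbound uN.
have : u m%:Z <= u (m%:Z + 1).
  case: (leqP m (sbound u)) => ms; last by rewrite !us //; lia.
  rewrite leNgt; apply/negP => desc.
  have : (m <= LD u)%N.
    by apply: (leq_bigmax_seq (F := id)) => //; rewrite mem_iota; lia.
  lia.
by rewrite le_eqVlt => /orP[/eqP/(sperm_inj hu)|//]; lia.
Qed.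

Lemma precLD_intro u w : (LD u <= LD w)%N -> (0 < LD w)%N ->
  u (LD w)%:Z < w (LD w)%:Z -> precLD u w.
Proof.
rewrite /precLD leq_eqVlt => /orP[/eqP ->|]; last by left.
by move=> *; right.
Qed.

Section Chain.
Variables (X : typ) (n : nat) (v : int -> int) (l : nat) (j : nat -> int).
Local Notation K := (LD v).
Local Notation k := (LD v)%:Z.
Local Notation w := (prodt v j k).
Hypotheses (v_sperm : is_sperm v) (v_even : X = TD -> ~~ odd (ell0 v))
  (v_fix : forall m : int, n%:Z < m -> v m = m) (K_gt0 : (0 < K)%N) (l_gt0 : (1 <= l)%N)
  (j_incr : forall a : nat, (1 <= a)%N -> (a < l)%N -> j a < j a.+1) (j_last : j l < k)
  (t_inW : forall a : nat, (1 <= a)%N -> (a <= l)%N -> inWinf X (t (j a) k))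
  (len_chain : forall a : nat, (1 <= a)%N -> (a <= l)%N -> len X (w a) = (len X v + a)%N).

Let v_odd := sperm_odd v_sperm.

Lemma v_fixed_beyond : fixed_beyond n v.
Proof.
move=> i hi; case: (ltP 0 i) => i0; first by apply: v_fix; lia.
by rewrite -[i]opprK v_odd v_fix ?opprK //; lia.
Qed.

Lemma v_abs_le x : (`|x| <= n)%N -> (`|v x| <= n)%N.
Proof. exact: fixed_beyond_abs_le (sperm_inj v_sperm) v_fixed_beyond. Qed.

Lemma LD_lt_n : (K < n)%N.
Proof.
rewrite ltnNge; apply/negP => nK; have := LD_descent K_gt0.
rewrite (@v_fix (k + 1)); last lia.
case: (eqVneq K n) => [Kn|nK'].
  by have := @v_abs_le k; lia.
by rewrite v_fix; lia.
Qed.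

Lemma v_increasing_above x y : k < x -> x < y -> v x < v y.
Proof.
have asc z : k < z -> v z < v (z + 1).
  by move=> kz; have := @LD_ascent v v_sperm (absz z); rewrite gez0_abs; lia.
move=> kx xy; have [d ->] : exists d : nat, y = x + d.+1%:Z by exists (absz (y - x)).-1; lia.
elim: d => [|d IH]; first exact: asc.
apply: lt_trans IH _; have -> : x + d.+2%:Z = x + d.+1%:Z + 1 by lia.
by apply: asc; lia.
Qed.

Lemma j_mono a b : (1 <= a)%N -> (a < b)%N -> (b <= l)%N -> j a < j b.
Proof.
move=> a1; elim: b => // b IH; rewrite ltnS leq_eqVlt => /orP[/eqP <- | ab] bl.
  by apply: j_incr; lia.
by apply: lt_trans (IH ab _) (j_incr _ _); lia.
Qed.

Lemma j_lt_k a : (1 <= a)%N -> (a <= l)%N -> j a < k.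
Proof.
move=> a1; rewrite leq_eqVlt => /orP[/eqP -> // | al].
exact: lt_trans (j_mono a1 al _) j_last.
Qed.

Lemma chain_sperm a : is_sperm (w a).
Proof. by elim: a => [|a IH] //; apply: (sperm_comp IH (sperm_t _ _)); lia. Qed.

Lemma chain_len_step a : (a < l)%N -> len X (w a.+1) = (len X (w a) + 1)%N.
Proof.
move=> al; rewrite len_chain //; case: a al => [|a] al; first by [].
by rewrite len_chain //; lia.
Qed.

Section Step.
Variable a : nat.
Hypothesis al : (a < l)%N.
Let jk := j_lt_k (ltn0Sn a) al.
Let tS := t_inW (ltn0Sn a) al.
Let lenS := chain_len_step al.

Lemma chain_j_neq0 : j a.+1 != 0.
Proof. exact: cover_j_neq0 (chain_sperm a) K_gt0 jk tS lenS. Qed.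

Lemma chain_j_neqN : j a.+1 != - k.
Proof. exact: cover_j_neqN K_gt0 jk lenS. Qed.

Lemma chain_lt : w a (j a.+1) < w a k.
Proof. exact: cover_lt (chain_sperm a) K_gt0 jk tS lenS. Qed.

Lemma chain_ell0_odd : odd (ell0 (w a.+1)) = odd (ell0 (w a)).
Proof. exact: cover_ell0_odd (chain_sperm a) K_gt0 jk tS lenS. Qed.

Lemma chain_at_k : w a.+1 k = w a (j a.+1).
Proof. by rewrite /= t_j ?chain_j_neq0 ?chain_j_neqN //; lia. Qed.

End Step.

Lemma first_id x : x != j 1 -> x != k -> x != - j 1 -> x != - k -> w 1 x = v x.
Proof. by move=> *; rewrite /= t_id. Qed.

Lemma first_no_between c : j 1 < c -> c < k -> v (j 1) < v c -> v c < v k ->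
  c != - j 1 -> c != - k -> False.
Proof.
exact: (@cover_no_between X v (j 1) K v_sperm K_gt0 (j_lt_k (leqnn 1) l_gt0)
  (t_inW (leqnn 1) l_gt0) (chain_len_step l_gt0) c).
Qed.

Lemma chain_lt_v a : (1 <= a)%N -> (a <= l)%N -> w a k < v k.
Proof.
elim: a => // a IH _ al; rewrite chain_at_k //.
case: a IH al => [|a] IH al; first exact: chain_lt.
exact: lt_trans (chain_lt al) (IH isT (ltnW al)).
Qed.

Lemma last_inW N : (forall m : int, N%:Z < m -> w l m = m) -> inW X N (w l).
Proof.
move=> fixN; split=> //; split=> [|XD]; first exact: chain_sperm.
suff /(_ l (leqnn l)) -> : forall a, (a <= l)%N -> odd (ell0 (w a)) = odd (ell0 v).
  exact: v_even.
by elim=> // a IH al; rewrite chain_ell0_odd // IH // ltnW.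
Qed.

(* Only the first reflection can reach below [-k]: a later one would swap the
   values of [v] at two positions beyond [k] against the order of [v] there. *)
Lemma j_ge_Nk a : (2 <= a)%N -> (a <= l)%N -> - k <= j a.
Proof.
move=> a2 al; rewrite leNgt; apply/negP => jaNk.
have j2Nk : j 2 < - k.
  case: (ltngtP 2 a) a2 => // [lt2a|e2a] _; last by rewrite e2a.
  exact: lt_trans (j_mono _ lt2a al) jaNk.
have j12 : j 1 < j 2 by apply: j_incr; lia.
have l1 : (1 < l)%N by lia.
have := chain_lt l1; rewrite chain_at_k // first_id /=; try (apply/eqP; lia).
have := @v_increasing_above (- j 2) (- j 1) ltac:(lia) ltac:(lia); rewrite !v_odd; lia.
Qed.

Lemma chain_above_k a x : (1 <= a)%N -> (a <= l)%N -> k < x -> w a x = w 1 x.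
Proof.
move=> + + kx; elim: a => // a IH _ al; case: a IH al => // a IH al.
have := j_ge_Nk (isT : 2 <= a.+2)%N al; have := j_lt_k (isT : 1 <= a.+2)%N al => jk Nkj.
have -> : w a.+2 x = w a.+1 (t (j a.+2) k x) by [].
by rewrite t_id ?IH //; apply/eqP; lia.
Qed.

Lemma last_above_k x : k < x -> x != - j 1 -> w l x = v x.
Proof.
move=> kx xNj; rewrite chain_above_k // first_id //; apply/eqP;
  have := j_lt_k (leqnn 1) l_gt0; lia.
Qed.

Lemma last_at_Nj1 : k < - j 1 -> w l (- j 1) = - v k.
Proof.
move=> kNj; rewrite chain_above_k //= t_Ni ?v_odd ?chain_j_neq0 ?chain_j_neqN //; lia.
Qed.

Lemma Nj1_le : - j 1 <= n%:Z + 1.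
Proof.
rewrite leNgt; apply/negP => Nj1; have Kn := LD_lt_n.
apply: (@first_no_between (- (n%:Z + 1))); try (apply/eqP; lia); try lia.
- by rewrite !v_fixed_beyond; lia.
- by rewrite v_fixed_beyond; have := @v_abs_le k; lia.
Qed.

Lemma last_ascent_above (m : nat) : (K < m)%N -> w l m%:Z <= w l (m%:Z + 1).
Proof.
move=> Km; have vm : v m%:Z < v (m%:Z + 1) by apply: v_increasing_above; lia.
have vj1 : v (j 1) = - v (- j 1) by rewrite v_odd opprK.
have vj1k : v (j 1) < v k := chain_lt l_gt0.
have [e|ne1] := eqVneq (m%:Z + 1) (- j 1).
  rewrite e last_at_Nj1 ?last_above_k; try (apply/eqP; lia); try lia.
  rewrite leNgt; apply/negP => lt_m.
  apply: (@first_no_between (- m%:Z)); rewrite ?v_odd ?vj1 -?e; try (apply/eqP; lia); lia.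
have [e|ne] := eqVneq m%:Z (- j 1).
  rewrite -e in vj1; rewrite e last_at_Nj1 ?last_above_k -?e; try (apply/eqP; lia); lia.
by rewrite !last_above_k //; try lia; apply: ltW.
Qed.

Lemma last_precLD : - j 1 <= n%:Z -> inW X n (w l) /\ precLD (w l) v.
Proof.
move=> Nj1n; have Kn := LD_lt_n; split.
  by apply: last_inW => m nm; rewrite last_above_k ?v_fix //; [lia | apply/eqP; lia].
apply: precLD_intro => //; last exact: chain_lt_v.
exact: LD_leq last_ascent_above.
Qed.

Lemma l_eq1 : - j 1 = n%:Z + 1 -> l = 1%N.
Proof.
move=> Nj1; have Kn := LD_lt_n; case: (ltngtP l 1) l_gt0 => // l1 _.
have := chain_lt l1; rewrite chain_at_k // -[w 0]/v.
have := j_ge_Nk (leqnn 2) l1; have := j_lt_k (isT : 1 <= 2)%N l1.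
have := chain_j_neqN l1; have := j_incr (leqnn 1) l1 => j12 j2Nk j2k Nkj2.
rewrite first_id; try (apply/eqP; lia).
rewrite (@v_fixed_beyond (j 1)); last lia.
by have := @v_abs_le (j 2); lia.
Qed.

Lemma last_LD_lt : - j 1 = n%:Z + 1 -> inW X n.+1 (w l) /\ (LD (w l) < K)%N.
Proof.
move=> Nj1; have Kn := LD_lt_n; split.
  by apply: last_inW => m nm; rewrite last_above_k ?v_fix //; try (apply/eqP; lia); lia.
suff : (LD (w l) <= K.-1)%N by lia.
apply: LD_leq => m Km; have [/last_ascent_above //|->] : (K < m)%N \/ m = K by lia.
rewrite (@last_above_k (k + 1)); try (apply/eqP; lia); try lia.
rewrite (l_eq1 Nj1) chain_at_k // -[w 0]/v (@v_fixed_beyond (j 1)); last lia.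
by have := @v_abs_le (k + 1); lia.
Qed.

Lemma chain_cases : (inW X n (w l) /\ precLD (w l) v) \/ (inW X n.+1 (w l) /\ (LD (w l) < K)%N).
Proof.
have := Nj1_le; case: (ltP n%:Z (- j 1)) => [nNj1|Nj1n] Nj1le.
  by right; apply: last_LD_lt; lia.
by left; exact: last_precLD.
Qed.

End Chain.

Unset Implicit Arguments.

Theorem lemma4p14 (X : typ) (n : nat) (v : int -> int) (l : nat) (j : nat -> int) :
  (0 < n)%N ->
  inW X n v ->
  (0 < LD v)%N ->
  (1 <= l)%N ->
  ((forall a : nat, (1 <= a)%N -> (a < l)%N -> j a < j a.+1) /\ j l < (LD v)%:Z
   \/
   X = TB /\ j 1%N = 0 /\
   (forall a : nat, (2 <= a)%N -> (a < l)%N -> j a < j a.+1) /\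
   ((2 <= l)%N -> j l < (LD v)%:Z)) ->
  (forall a : nat, (1 <= a)%N -> (a <= l)%N ->
     inWinf X (t (j a) (LD v)%:Z) /\
     len X (prodt v j (LD v)%:Z a) = (len X v + a)%N) ->
  (inW X n (prodt v j (LD v)%:Z l) /\ precLD (prodt v j (LD v)%:Z l) v)
  \/
  (inW X n.+1 (prodt v j (LD v)%:Z l) /\ (LD (prodt v j (LD v)%:Z l) < LD v)%N).
Proof.
move=> _ [[v_sperm v_even] v_fix] K_gt0 l_gt0 j_cases steps.
have t_inW a a1 al := proj1 (steps a a1 al).
have len_chain a a1 al := proj2 (steps a a1 al).
have [j_incr j_last] : (forall a : nat, (1 <= a)%N -> (a < l)%N -> j a < j a.+1) /\ j l < (LD v)%:Z.
  case: j_cases => // -[_ [j10 _]]; have j1k : j 1%N < (LD v)%:Z by rewrite j10; lia.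
  have := cover_j_neq0 v_sperm K_gt0 j1k (t_inW 1%N isT l_gt0) (len_chain 1%N isT l_gt0).
  by rewrite j10 eqxx.
exact: chain_cases v_sperm v_even v_fix K_gt0 l_gt0 j_incr j_last t_inW len_chain.
Qed.
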